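(* Let $k$ be a field and $Q,q\in k^\times$, $d\ge1$, and suppose $\mathcal H^B_{Q,q}(d)$ is semisimple. Then $V_{2d}$ generates $V_{2d+1}$; that is, the $\mathcal H^B_{Q,q}(d)$-module $V_{2d+1}^{\otimes d}$ is isomorphic to a direct summand of a finite direct sum of copies of $V_{2d}^{\otimes d}$.
   Context: $\mathcal H^B_{Q,q}(d)$ is the algebra generated by $T_0,\dots,T_{d-1}$ with relations $(T_0+Q)(T_0-Q^{-1})=0$; $(T_i+q)(T_i-q^{-1})=0$ ($i>0$); $T_iT_{i+1}T_i=T_{i+1}T_iT_{i+1}$ ($i>0$); $T_0T_1T_0T_1=T_1T_0T_1T_0$; $T_iT_j=T_jT_i$ ($|i-j|>1$). For $N=2s$ let $\mathbb I_N=\{-\tfrac{2s-1}{2},\dots,-\tfrac12,\tfrac12,\dots,\tfrac{2s-1}{2}\}$ and for $N=2s+1$ let $\mathbb I_N=\{-s,\dots,s\}$; $V_N$ has basis $\{v_i:i\in\mathbb I_N\}$. $R_q(v_i\otimes v_j)=q^{-1}v_i\otimes v_j$ if $i=j$, $v_j\otimes v_i$ if $i<j$, $v_j\otimes v_i+(q^{-1}-q)v_i\otimes v_j$ if $i>j$; $K_Q(v_i)=Q^{-1}v_i$ if $i=0$, $v_{-i}$ if $i>0$, $v_{-i}+(Q^{-1}-Q)v_i$ if $i<0$. The algebra acts on $V_N^{\otimes d}$ from the right: $T_i$ ($i>0$) by $R_q$ on factors $i,i+1$, $T_0$ by $K_Q$ on the first factor. *)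

From HB Require Import structures.
From mathcomp Require Import all_boot all_order all_algebra.
Set Implicit Arguments. Unset Strict Implicit. Unset Printing Implicit Defensive.
Import Order.TTheory GRing.Theory Num.Theory.
Local Open Scope ring_scope.

(* Representations of H^B_{Q,q}(d) on k^n (row vectors, RIGHT action:     *)
(* v . T_i := v *m T i).  Generator T_i, i = 0..d-1, is indexed by 'I_d.  *)
(* A right H-module structure on k^n is exactly a family of matrices     *)
(* satisfying the defining relations (v.(ab) = (v.a).b = v *m A *m B).    *)
Definition is_HB_rep (k : fieldType) (Q q : k) (d n : nat)
    (T : 'I_d -> 'M[k]_n) : Prop :=
  [/\ (forall i : 'I_d, val i = 0%N ->
         (T i + Q%:M) *m (T i - Q^-1%:M) = 0),
      (forall i : 'I_d, (0 < val i)%N ->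
         (T i + q%:M) *m (T i - q^-1%:M) = 0),
      (forall i j : 'I_d, (0 < val i)%N -> val j = (val i).+1 ->
         T i *m T j *m T i = T j *m T i *m T j),
      (forall i j : 'I_d, val i = 0%N -> val j = 1%N ->
         T i *m T j *m T i *m T j = T j *m T i *m T j *m T i) &
      (forall i j : 'I_d, ((val i).+1 < val j)%N || ((val j).+1 < val i)%N ->
         T i *m T j = T j *m T i)].

Definition completely_reducible (k : fieldType) (d n : nat)
    (T : 'I_d -> 'M[k]_n) : Prop :=
  forall U : 'M[k]_n, (forall i, (U *m T i <= U)%MS) ->
  exists W : 'M[k]_n, (forall i, (W *m T i <= W)%MS) /\
    (U :&: W <= (0 : 'M[k]_n))%MS /\ (1%:M <= U + W)%MS.

(* H^B_{Q,q}(d) is semisimple: every (finite-dimensional) H-module is     *)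
(* semisimple.  (H is finite dimensional, so this is equivalent to the   *)
(* semisimplicity of the regular module.)                   *)
Definition HB_semisimple (k : fieldType) (Q q : k) (d : nat) : Prop :=
  forall (n : nat) (T : 'I_d -> 'M[k]_n), is_HB_rep Q q T ->
    completely_reducible T.

(* I_N is identified with 'I_N via a |-> a - (N-1)/2, so:                 *)
(*   order is preserved, index 0  <->  2a+1 = N,  index > 0 <-> 2a+1 > N, *)
(*   index -i  <->  rev_ord a.                                            *)
(* Basis of V_N^{(x)d}: functions u : 'I_d -> 'I_N (u p = index of the    *)
(* (p+1)-th tensor factor), i.e. v_{u 0} (x) ... (x) v_{u (d-1)}.         *)
Definition tbasis (d N : nat) := {ffun 'I_d -> 'I_N}.
Definition tdim (d N : nat) : nat := #|{: tbasis d N}|.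

Section TensorOps.
Variables (k : fieldType) (d N : nat).

Definition prev_ord (i : 'I_d) : 'I_d :=
  Ordinal (leq_ltn_trans (leq_pred i) (ltn_ord i)).

Definition swap_at (i : 'I_d) (u : tbasis d N) : tbasis d N :=
  [ffun p => if p == prev_ord i then u i
             else if p == i then u (prev_ord i) else u p].

Definition set_first (p0 : 'I_d) (a : 'I_N) (u : tbasis d N) : tbasis d N :=
  [ffun p => if p == p0 then a else u p].

(* coefficient of basis vector w in R_q applied to factors i-1, i of u    *)
Definition R_coef (q : k) (i : 'I_d) (u w : tbasis d N) : k :=
  let a := u (prev_ord i) in let b := u i in
  if a == b then (if w == u then q^-1 else 0)
  else if (a < b)%N then (if w == swap_at i u then 1 else 0)
  else (if w == swap_at i u then 1 else 0) + (if w == u then q^-1 - q else 0).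

(* coefficient of basis vector w in K_Q applied to the first factor of u
   (p0 is the position 0) *)
Definition K_coef (Q : k) (p0 : 'I_d) (u w : tbasis d N) : k :=
  let a := u p0 in
  if (a.*2.+1 == N)%N then (if w == u then Q^-1 else 0)
  else if (N < a.*2.+1)%N then (if w == set_first p0 (rev_ord a) u then 1 else 0)
  else (if w == set_first p0 (rev_ord a) u then 1 else 0)
       + (if w == u then Q^-1 - Q else 0).

Definition T_coef (Q q : k) (i : 'I_d) (u w : tbasis d N) : k :=
  if val i == 0%N then K_coef Q i u w else R_coef q i u w.

(* Matrix of T_i on V_N^{(x)d} (row = input basis vector, right action). *)
Definition T_mx (Q q : k) (i : 'I_d) : 'M[k]_(tdim d N) :=
  \matrix_(x, y) T_coef Q q i (enum_val x) (enum_val y).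

End TensorOps.

Definition intertwines (k : fieldType) (d n1 n2 : nat)
    (T1 : 'I_d -> 'M[k]_n1) (T2 : 'I_d -> 'M[k]_n2) (F : 'M[k]_(n1, n2)) : Prop :=
  forall i, T1 i *m F = F *m T2 i.

Definition rep_dsum (k : fieldType) (d n m : nat) (T : 'I_d -> 'M[k]_n)
    (i : 'I_d) : 'M[k]_(\sum_(j < m) n) :=
  \mxdiag_(j < m) T i.

(* For 0 <= e <= d let g_e : I_2d -> I_2d+1 be the odd, order preserving map
   sending +-(j + 1/2) to +-j for j < e and to +-(j + 1) for j >= e: it misses
   +-e, and for e > 0 it merges +-1/2 into 0.  Applied letterwise and rescaled
   by suitable powers of Q^-1 and q^-1, g_e becomes a homomorphism of
   H^B_{Q,q}(d)-modules V_2d^(x)d -> V_2d+1^(x)d sending each basis vector to a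
   nonzero multiple of a basis vector.  A basis vector of V_2d+1^(x)d has only d
   letters, so it avoids +-e for some e <= d and lies in the image of the
   e-th map.  Together these maps give a surjective homomorphism from d + 1
   copies of V_2d^(x)d onto V_2d+1^(x)d, which splits by semisimplicity. *)

From mathcomp Require Import all_boot all_order all_algebra.
From mathcomp Require Import ring zify.
Set Implicit Arguments. Unset Strict Implicit. Unset Printing Implicit Defensive.
Import GRing.Theory.
Local Open Scope ring_scope.

Ltac decide_nat :=
  repeat match goal with
  | |- context [(?x <= ?y)%N] =>
      let H := fresh in
      first [ have H : (x <= y)%N = true by apply/idP; lia
            | have H : (x <= y)%N = false by apply/negbTE/negP; lia ];
      rewrite H; clear H
  | |- context [?x == ?y] =>
      let H := fresh in
      first [ have H : (x == y) = true by apply/eqP; lia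
            | have H : (x == y) = false by apply/negbTE/eqP; lia ];
      rewrite H; clear H
  end.

Section IntertwinerSplit.
Variables (k : fieldType) (d n1 n2 : nat).
Variables (TX : 'I_d -> 'M[k]_n1) (TY : 'I_d -> 'M[k]_n2).

Lemma intertwiner_split (Phi : 'M[k]_(n1, n2)) :
  completely_reducible TX -> intertwines TX TY Phi -> row_full Phi ->
  exists F : 'M[k]_(n2, n1), intertwines TY TX F /\ F *m Phi = 1%:M.
Proof.
move=> crX itw fullPhi.
have kerX i : (kermx Phi *m TX i <= kermx Phi)%MS.
  by apply/sub_kermxP; rewrite -mulmxA itw mulmxA mulmx_ker mul0mx.
have [W [invW [capW sumW]]] := crX _ kerX.
have /row_fullP [P PWPhi] : row_full (W *m Phi).
  rewrite -sub1mx; apply: submx_trans (_ : Phi <= _)%MS; first by rewrite sub1mx.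
  rewrite -{1}[Phi]mul1mx; apply: submx_trans (submxMr Phi sumW) _.
  by rewrite addsmxMr mulmx_ker adds0mx.
exists (P *m W); split; last by rewrite -mulmxA.
move=> i; apply/eqP; rewrite -subr_eq0 -submx0; apply: submx_trans capW.
rewrite sub_capmx; apply/andP; split.
  apply/sub_kermxP; rewrite mulmxBl -!mulmxA itw PWPhi mulmx1.
  by rewrite !mulmxA -(mulmxA P) PWPhi mul1mx subrr.
rewrite addmx_sub ?mulmxA ?submxMl // -scaleN1r scalemx_sub //.
by rewrite -mulmxA (submx_trans (submxMl _ _) (invW i)).
Qed.

End IntertwinerSplit.

Lemma mul_mxdiag (R : pzSemiRingType) (p : nat) (p_ : 'I_p -> nat)
    (A_ B_ : forall i, 'M[R]_(p_ i)) :
  \mxdiag_i A_ i *m \mxdiag_i B_ i = \mxdiag_i (A_ i *m B_ i).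
Proof.
rewrite [X in _ *m X]/mxdiag mul_mxdiag_mxblock /mxdiag.
by apply: eq_mxblock => i j; case: eqP => [->|_]; rewrite ?conform_mx_id ?mulmx0.
Qed.

Lemma is_HB_rep_dsum (k : fieldType) (Q q : k) (d n m : nat) (T : 'I_d -> 'M[k]_n) :
  is_HB_rep Q q T -> is_HB_rep Q q (rep_dsum m T).
Proof.
have scalarE (c : k) : c%:M = \mxdiag_(j < m) (c%:M : 'M_n) by rewrite mxdiagZ.
rewrite /rep_dsum; case=> quadK quadR braid braidB far; split.
- by move=> i /quadK e; rewrite !scalarE -mxdiagD -mxdiagB mul_mxdiag e mxdiag0.
- by move=> i /quadR e; rewrite !scalarE -mxdiagD -mxdiagB mul_mxdiag e mxdiag0.
- by move=> i j hi hj; rewrite !mul_mxdiag braid.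
- by move=> i j hi hj; rewrite !mul_mxdiag braidB.
- by move=> i j hij; rewrite !mul_mxdiag far.
Qed.

Section TwoTermOperators.
Variables (k : fieldType) (B : finType).
Implicit Types (a b Psi : B -> k) (f : B -> B).

Definition twoterm_mx a b f : 'M[k]_#|B| :=
  \matrix_(x, y) (a (enum_val x) * (enum_val y == f (enum_val x))%:R
                  + b (enum_val x) * (enum_val y == enum_val x)%:R).

Definition twoterm_act a b f Psi (u : B) : k := a u * Psi (f u) + b u * Psi u.

Definition basis_col (y : 'I_#|B|) (v : B) : k := (enum_val y == v)%:R.

Lemma sum_indicator (c : 'I_#|B|) (g : 'I_#|B| -> k) :
  \sum_z ((enum_val z == enum_val c)%:R * g z) = g c.
Proof.
rewrite (bigD1 c) //= eqxx mul1r big1 ?addr0 // => z nzc.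
by rewrite (inj_eq enum_val_inj) (negPf nzc) mul0r.
Qed.

Lemma twoterm_mulmx a b f p (C : 'M[k]_(#|B|, p)) v y :
  (twoterm_mx a b f *m C) (enum_rank v) y =
  a v * C (enum_rank (f v)) y + b v * C (enum_rank v) y.
Proof.
rewrite mxE (eq_bigr (fun z => a v * ((enum_val z == enum_val (enum_rank (f v)))%:R * C z y)
  + b v * ((enum_val z == enum_val (enum_rank v))%:R * C z y))); last first.
  by move=> z _; rewrite mxE !enum_rankK; ring.
by rewrite big_split /= -!mulr_sumr !sum_indicator.
Qed.

Lemma basis_colE v y : (1%:M : 'M[k]_#|B|) (enum_rank v) y = basis_col y v.
Proof. by rewrite mxE /basis_col (can2_eq enum_valK enum_rankK) eq_sym. Qed.

Lemma twoterm_mx_entry a b f v y :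
  twoterm_mx a b f (enum_rank v) y = twoterm_act a b f (basis_col y) v.
Proof. by rewrite -[twoterm_mx a b f]mulmx1 twoterm_mulmx !basis_colE. Qed.

Lemma twoterm_mx_quadratic a b f (c : k) : c != 0 ->
  (forall Psi v, twoterm_act a b f (twoterm_act a b f Psi) v =
                 (c^-1 - c) * twoterm_act a b f Psi v + Psi v) ->
  (twoterm_mx a b f + c%:M) *m (twoterm_mx a b f - c^-1%:M) = 0.
Proof.
move=> c0 quad; set M := twoterm_mx a b f.
have M2 : M *m M = (c^-1 - c) *: M + 1%:M.
  apply/matrixP => x y; rewrite -(enum_valK x) twoterm_mulmx !twoterm_mx_entry.
  by rewrite [RHS]mxE [in RHS]mxE twoterm_mx_entry basis_colE; apply: quad.
rewrite mulmxDl !mulmxBr M2 mul_mx_scalar mul_scalar_mx -scalar_mxM mulfV //.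
by apply/matrixP => x y; rewrite !mxE; ring.
Qed.

Variables (I : Type) (aI bI : I -> B -> k) (fI : I -> B -> B).

Fixpoint word_mx (w : seq I) : 'M[k]_#|B| :=
  if w is i :: w' then twoterm_mx (aI i) (bI i) (fI i) *m word_mx w' else 1%:M.

Fixpoint word_act (w : seq I) (Psi : B -> k) : B -> k :=
  if w is i :: w' then twoterm_act (aI i) (bI i) (fI i) (word_act w' Psi) else Psi.

Lemma word_mx_entry w v y : word_mx w (enum_rank v) y = word_act w (basis_col y) v.
Proof.
by elim: w v => [|i w IHw] v /=; rewrite ?basis_colE // twoterm_mulmx !IHw.
Qed.

Lemma word_mx_eq w1 w2 :
  (forall Psi v, word_act w1 Psi v = word_act w2 Psi v) -> word_mx w1 = word_mx w2.
Proof.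
by move=> eqw; apply/matrixP => x y; rewrite -(enum_valK x) !word_mx_entry eqw.
Qed.

End TwoTermOperators.

Section WeightedMap.
Variables (k : fieldType) (B1 B2 : finType).
Variables (a1 b1 : B1 -> k) (f1 : B1 -> B1) (a2 b2 : B2 -> k) (f2 : B2 -> B2).
Variables (c : B1 -> k) (G : B1 -> B2).

Definition weighted_map_mx : 'M[k]_(#|B1|, #|B2|) :=
  \matrix_(x, y) (c (enum_val x) * (enum_val y == G (enum_val x))%:R).

Definition twoterm_compat (u : B1) : Prop :=
  (a1 u * c (f1 u) = c u * a2 (G u) /\ b1 u = b2 (G u)) \/
  (f2 (G u) = G u /\ a1 u * c (f1 u) + b1 u * c u = c u * (a2 (G u) + b2 (G u))).

Lemma weighted_map_mx_intertwines :
  (forall u, G (f1 u) = f2 (G u)) -> (forall u, twoterm_compat u) ->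
  twoterm_mx a1 b1 f1 *m weighted_map_mx = weighted_map_mx *m twoterm_mx a2 b2 f2.
Proof.
move=> Gf compat; apply/matrixP => x y; rewrite -(enum_valK x).
set u := enum_val x; rewrite twoterm_mulmx !mxE !enum_rankK Gf.
rewrite (eq_bigr (fun z => c u * ((enum_val z == enum_val (enum_rank (G u)))%:R *
                               twoterm_mx a2 b2 f2 z y))); last first.
  by move=> z _; rewrite !mxE !enum_rankK; ring.
rewrite -mulr_sumr sum_indicator twoterm_mx_entry /twoterm_act /basis_col.
case: (compat u) => [[a_eq b_eq]|[f2G ab_eq]]; first by rewrite !mulrA a_eq b_eq; ring.
rewrite f2G; set t := (_ == G u)%:R.
by transitivity ((a1 u * c (f1 u) + b1 u * c u) * t); [ring | rewrite ab_eq; ring].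
Qed.

Lemma weighted_map_mx_delta u : c u != 0 ->
  ((delta_mx 0 (enum_rank (G u)) : 'rV[k]_#|B2|) <= weighted_map_mx)%MS.
Proof.
move=> cu0; have rowE : row (enum_rank u) weighted_map_mx =
                        c u *: delta_mx 0 (enum_rank (G u)).
  by apply/rowP => y; rewrite !mxE enum_rankK (can2_eq enum_valK enum_rankK).
by rewrite -[delta_mx _ _]scale1r -(mulVf cu0) -scalerA -rowE scalemx_sub ?row_sub.
Qed.

End WeightedMap.

Lemma submx_mxcol (F : fieldType) (p n : nat) (p_ : 'I_p -> nat)
    (B_ : forall i, 'M[F]_(p_ i, n)) i :
  (B_ i <= \mxcol_j B_ j)%MS.
Proof. by rewrite -{1}(mxcolK B_ i) /submxcol rowsubE submxMl. Qed.

Section LocalIdentities.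
Variables (k : fieldType) (N : nat).
Implicit Types (x y z : 'I_N) (Q q : k).

Definition R_move_coef x y : k := (nat_of_ord x != nat_of_ord y)%:R.
Definition R_stay_coef q x y : k :=
  if nat_of_ord x == nat_of_ord y then q^-1 else if (x < y)%N then 0 else q^-1 - q.
Definition K_move_coef x : k := ((nat_of_ord x).*2.+1 != N)%:R.
Definition K_stay_coef Q x : k :=
  if (nat_of_ord x).*2.+1 == N then Q^-1
  else if (N < (nat_of_ord x).*2.+1)%N then 0 else Q^-1 - Q.

(* [R_loc q F x y] is [F] extended linearly and evaluated at [R_q (v_x (x) v_y)];
   likewise [K_loc Q F x] at [K_Q v_x]. *)
Definition R_loc q (F : 'I_N -> 'I_N -> k) x y :=
  R_move_coef x y * F y x + R_stay_coef q x y * F x y.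
Definition K_loc Q (F : 'I_N -> k) x :=
  K_move_coef x * F (rev_ord x) + K_stay_coef Q x * F x.

Definition R_loc12 q (F : 'I_N -> 'I_N -> 'I_N -> k) x y z :=
  R_loc q (fun x' y' => F x' y' z) x y.
Definition R_loc23 q (F : 'I_N -> 'I_N -> 'I_N -> k) x y z := R_loc q (F x) y z.
Definition K_loc1 Q (F : 'I_N -> 'I_N -> k) x y := K_loc Q (fun x' => F x' y) x.

Lemma R_loc_quadratic q F x y : q != 0 ->
  R_loc q (R_loc q F) x y = (q^-1 - q) * R_loc q F x y + F x y.
Proof.
move=> q0; rewrite /R_loc /R_move_coef /R_stay_coef.
by case: (ltngtP x y) => [xy|xy|/val_inj <-]; decide_nat; rewrite /=; field.
Qed.

Lemma K_loc_quadratic Q F x : Q != 0 ->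
  K_loc Q (K_loc Q F) x = (Q^-1 - Q) * K_loc Q F x + F x.
Proof.
move=> Q0; rewrite /K_loc /K_move_coef /K_stay_coef rev_ordK; have := ltn_ord x.
case: (ltngtP (nat_of_ord x).*2.+1 N) => [xN|xN|xN] ltxN.
- by rewrite /=; decide_nat; rewrite /=; field.
- by rewrite /=; decide_nat; rewrite /=; field.
- have -> : rev_ord x = x by apply: val_inj => /=; lia.
  by decide_nat; rewrite /=; field.
Qed.

Lemma R_loc_braid q F x y z : q != 0 ->
  R_loc12 q (R_loc23 q (R_loc12 q F)) x y z = R_loc23 q (R_loc12 q (R_loc23 q F)) x y z.
Proof.
move=> q0; rewrite /R_loc12 /R_loc23 /R_loc /R_move_coef /R_stay_coef.
case: (ltngtP x y) => [xy|xy|/val_inj exy]; case: (ltngtP y z) => [yz|yz|/val_inj eyz];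
  case: (ltngtP x z) => [xz|xz|/val_inj exz]; subst; decide_nat; rewrite /=; try lia; by field.
Qed.

Lemma KR_loc_braid Q q F x y : Q != 0 -> q != 0 ->
  K_loc1 Q (R_loc q (K_loc1 Q (R_loc q F))) x y =
  R_loc q (K_loc1 Q (R_loc q (K_loc1 Q F))) x y.
Proof.
move=> Q0 q0; rewrite /K_loc1 /K_loc /R_loc /K_move_coef /K_stay_coef.
rewrite /R_move_coef /R_stay_coef !rev_ordK.
have ltxN := ltn_ord x; have ltyN := ltn_ord y.
case: (ltngtP (nat_of_ord x).*2.+1 N) => [h1|h1|h1].
all: try (have rx : rev_ord x = x by apply: val_inj => /=; lia); try rewrite rx.
all: case: (ltngtP (nat_of_ord y).*2.+1 N) => [h2|h2|h2].
all: try (have ry : rev_ord y = y by apply: val_inj => /=; lia); try rewrite ry.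
all: case: (ltngtP x y) => [h3|h3|h3].
all: try (have e3 : y = x by apply: val_inj; lia); try rewrite e3.
all: case: (ltngtP x (rev_ord y)) => [h4|h4|h4].
all: try (have e4 : x = rev_ord y by apply: val_inj => /=; rewrite /= in h4; lia);
  try rewrite e4; rewrite ?rev_ordK.
all: rewrite /= in h1 h2 h3 h4 *; decide_nat; rewrite /=; try lia; field; by rewrite Q0 q0.
Qed.

End LocalIdentities.

Section SetFirst.
Variables (d N : nat).
Implicit Types (u : tbasis d N) (p : 'I_d) (x y : 'I_N).

Lemma set_first_eq p x u : set_first p x u p = x.
Proof. by rewrite ffunE eqxx. Qed.

Lemma set_first_ne p p' x u : p' != p -> set_first p x u p' = u p'.
Proof. by rewrite ffunE => /negPf ->. Qed.

Lemma set_first_id p u : set_first p (u p) u = u.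
Proof. by apply/ffunP => p'; rewrite ffunE; case: eqP => [->|]. Qed.

Lemma set_first_overwrite p x y u : set_first p y (set_first p x u) = set_first p y u.
Proof. by apply/ffunP => p'; rewrite !ffunE; case: eqP. Qed.

Lemma set_first_id2 p1 p2 u : set_first p1 (u p1) (set_first p2 (u p2) u) = u.
Proof. by rewrite !set_first_id. Qed.

Lemma set_first_id3 p1 p2 p3 u :
  set_first p1 (u p1) (set_first p2 (u p2) (set_first p3 (u p3) u)) = u.
Proof. by rewrite !set_first_id. Qed.

Lemma set_firstC p1 p2 x y u : p1 != p2 ->
  set_first p1 x (set_first p2 y u) = set_first p2 y (set_first p1 x u).
Proof.
move=> p12; apply/ffunP => p; rewrite !ffunE.
by case: eqP => [->|//]; rewrite (negPf p12).
Qed.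

End SetFirst.

Lemma prev_ord_neq d (i : 'I_d) : (0 < i)%N -> prev_ord i != i.
Proof. by move=> i_gt0; rewrite -val_eqE /=; lia. Qed.

Lemma prev_ord0 d (i : 'I_d) : i = 0%N :> nat -> prev_ord i = i.
Proof. by move=> i0; apply: val_inj => /=; rewrite i0. Qed.

Lemma prev_ord_succ d (i j : 'I_d) : j = i.+1 :> nat -> prev_ord j = i.
Proof. by move=> ji; apply: val_inj => /=; rewrite ji. Qed.

Section TensorAction.
Variables (k : fieldType) (d N : nat) (Q q : k).
Local Notation B := (tbasis d N).
Implicit Types (u w : B) (i j p : 'I_d).

Definition T_move i u : B :=
  if val i == 0%N then set_first i (rev_ord (u i)) u else swap_at i u.
Definition T_move_coef i u : k :=
  if val i == 0%N then K_move_coef k (u i) else R_move_coef k (u (prev_ord i)) (u i).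
Definition T_stay_coef i u : k :=
  if val i == 0%N then K_stay_coef Q (u i) else R_stay_coef q (u (prev_ord i)) (u i).

Lemma T_mx_twoterm i :
  T_mx N Q q i = twoterm_mx (T_move_coef i) (T_stay_coef i) (T_move i).
Proof.
apply/matrixP => x y; rewrite !mxE /T_coef /T_move_coef /T_stay_coef /T_move.
set u := enum_val x; set w := enum_val y.
case: eqP => i0.
- rewrite /K_coef /K_move_coef /K_stay_coef /=; case: eqP => mid.
  + have -> : set_first i (rev_ord (u i)) u = u.
      by rewrite -[RHS](set_first_id i); congr set_first; apply: val_inj => /=; lia.
    by case: (w == u); rewrite /=; ring.
  + by case: ifP => _; case: (w == u); case: (w == _); rewrite /=; ring.
- rewrite /R_coef /R_move_coef /R_stay_coef /= -val_eqE /=; case: eqP => eq_ab.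
  + have -> : swap_at i u = u.
      apply/ffunP => p; rewrite ffunE.
      case: (eqVneq p (prev_ord i)) => [->|_]; first exact/esym/val_inj.
      by case: (eqVneq p i) => [->|_] //; apply: val_inj.
    by case: (w == u); rewrite /=; ring.
  + by case: ifP => _; case: (w == u); case: (w == _); rewrite /=; ring.
Qed.

Local Notation T_act := (word_act T_move_coef T_stay_coef T_move).
Local Notation T_op i := (twoterm_act (T_move_coef i) (T_stay_coef i) (T_move i)).

Lemma T_mx_word_eq s1 s2 : (forall Psi v, T_act s1 Psi v = T_act s2 Psi v) ->
  foldr (fun i M => T_mx N Q q i *m M) 1%:M s1 =
  foldr (fun i M => T_mx N Q q i *m M) 1%:M s2.
Proof.
have wordE s : foldr (fun i M => T_mx N Q q i *m M) 1%:M s =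
               word_mx T_move_coef T_stay_coef T_move s.
  by elim: s => //= i s ->; rewrite T_mx_twoterm.
by rewrite !wordE; apply: word_mx_eq.
Qed.

(* A relation among the generators only involves the letters at the positions
   they move: freezing all other letters reduces it to one of the identities
   on [R_loc] and [K_loc] above. *)
Lemma T_op_K i u Psi F : i = 0%N :> nat ->
  (forall x, Psi (set_first i x u) = F x) ->
  forall x, T_op i Psi (set_first i x u) = K_loc Q F x.
Proof.
move=> i0 PsiF x; rewrite /= /twoterm_act /T_move /T_move_coef /T_stay_coef.
have -> : (val i == 0%N) by apply/eqP.
by rewrite set_first_eq set_first_overwrite !PsiF.
Qed.

Lemma T_op_R i u Psi F : (0 < i)%N ->
  (forall x y, Psi (set_first (prev_ord i) x (set_first i y u)) = F x y) ->
  forall x y, T_op i Psi (set_first (prev_ord i) x (set_first i y u)) =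
              R_loc q F x y.
Proof.
move=> i_gt0 PsiF x y; have pi := prev_ord_neq i_gt0.
rewrite /= /twoterm_act /T_move /T_move_coef /T_stay_coef.
have -> : (val i == 0%N) = false by apply/negbTE; rewrite -lt0n.
rewrite set_first_eq set_first_ne 1?eq_sym // set_first_eq.
have -> : swap_at i (set_first (prev_ord i) x (set_first i y u)) =
          set_first (prev_ord i) y (set_first i x u).
  apply/ffunP => p; rewrite !ffunE eqxx (eq_sym i) (negPf pi) eqxx.
  by case: (p == prev_ord i); case: (p == i).
by rewrite !PsiF.
Qed.

Section Braid.
Variables (i j : 'I_d).
Hypotheses (i_gt0 : (0 < i)%N) (ji : j = i.+1 :> nat).

Let set3 u x y z : B := set_first (prev_ord i) x (set_first i y (set_first j z u)).

Lemma T_op_R12 u Psi F : (forall x y z, Psi (set3 u x y z) = F x y z) ->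
  forall x y z, T_op i Psi (set3 u x y z) = R_loc12 q F x y z.
Proof. by move=> PsiF x y z; apply: T_op_R => // x' y'; apply: PsiF. Qed.

Lemma T_op_R23 u Psi F : (forall x y z, Psi (set3 u x y z) = F x y z) ->
  forall x y z, T_op j Psi (set3 u x y z) = R_loc23 q F x y z.
Proof.
have j_gt0 : (0 < j)%N by rewrite ji.
have [pi_i pi_j] : prev_ord i != i /\ prev_ord i != j.
  by split; rewrite -val_eqE /=; lia.
have set3E u' x y z : set3 u' x y z =
    set_first (prev_ord j) y (set_first j z (set_first (prev_ord i) x u')).
  by rewrite /set3 (prev_ord_succ ji) -(set_firstC _ _ _ pi_j) -(set_firstC _ _ _ pi_i).
move=> PsiF x y z; rewrite set3E; apply: T_op_R => // y' z'.
by rewrite -set3E; apply: PsiF.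
Qed.

Lemma T_mx_braid : q != 0 ->
  T_mx N Q q i *m T_mx N Q q j *m T_mx N Q q i =
  T_mx N Q q j *m T_mx N Q q i *m T_mx N Q q j.
Proof.
move=> q0; have := @T_mx_word_eq [:: i; j; i] [:: j; i; j].
rewrite /= !mulmx1 !mulmxA.
apply=> Psi v /=; rewrite -(set_first_id3 (prev_ord i) i j v).
pose F x y z := Psi (set3 v x y z); have PsiF x y z : Psi (set3 v x y z) = F x y z by [].
rewrite -/(set3 v _ _ _) (T_op_R12 (T_op_R23 (T_op_R12 PsiF))).
by rewrite (T_op_R23 (T_op_R12 (T_op_R23 PsiF))) R_loc_braid.
Qed.

End Braid.

Section BraidB.
Variables (i j : 'I_d).
Hypotheses (i0 : i = 0%N :> nat) (j1 : j = 1%N :> nat).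

Let set2 u x y : B := set_first i x (set_first j y u).

Lemma T_op_K1 u Psi F : (forall x y, Psi (set2 u x y) = F x y) ->
  forall x y, T_op i Psi (set2 u x y) = K_loc1 Q F x y.
Proof. by move=> PsiF x y; apply: T_op_K => // x'; apply: PsiF. Qed.

Lemma T_op_R2 u Psi F : (forall x y, Psi (set2 u x y) = F x y) ->
  forall x y, T_op j Psi (set2 u x y) = R_loc q F x y.
Proof.
have pj : prev_ord j = i by apply: prev_ord_succ; rewrite i0 j1.
by rewrite /set2 -pj => PsiF x y; apply: T_op_R => //; rewrite j1.
Qed.

Lemma T_mx_braidB : Q != 0 -> q != 0 ->
  T_mx N Q q i *m T_mx N Q q j *m T_mx N Q q i *m T_mx N Q q j =
  T_mx N Q q j *m T_mx N Q q i *m T_mx N Q q j *m T_mx N Q q i.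
Proof.
move=> Q0 q0; have := @T_mx_word_eq [:: i; j; i; j] [:: j; i; j; i].
rewrite /= !mulmx1 !mulmxA.
apply=> Psi v /=; rewrite -(set_first_id2 i j v).
pose F x y := Psi (set2 v x y); have PsiF x y : Psi (set2 v x y) = F x y by [].
rewrite -/(set2 v _ _) (T_op_K1 (T_op_R2 (T_op_K1 (T_op_R2 PsiF)))).
by rewrite (T_op_R2 (T_op_K1 (T_op_R2 (T_op_K1 PsiF)))) KR_loc_braid.
Qed.

End BraidB.

Lemma T_mx_quadK i : Q != 0 -> i = 0%N :> nat ->
  (T_mx N Q q i + Q%:M) *m (T_mx N Q q i - Q^-1%:M) = 0.
Proof.
move=> Q0 i0; rewrite T_mx_twoterm; apply: twoterm_mx_quadratic => // Psi v.
rewrite -(set_first_id i v).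
pose F x := Psi (set_first i x v); have PsiF x : Psi (set_first i x v) = F x by [].
by rewrite (T_op_K i0 (T_op_K i0 PsiF)) (T_op_K i0 PsiF) PsiF K_loc_quadratic.
Qed.

Lemma T_mx_quadR i : q != 0 -> (0 < i)%N ->
  (T_mx N Q q i + q%:M) *m (T_mx N Q q i - q^-1%:M) = 0.
Proof.
move=> q0 i_gt0; rewrite T_mx_twoterm; apply: twoterm_mx_quadratic => // Psi v.
rewrite -(set_first_id2 (prev_ord i) i v).
pose F x y := Psi (set_first (prev_ord i) x (set_first i y v)).
have PsiF x y : Psi (set_first (prev_ord i) x (set_first i y v)) = F x y by [].
rewrite (T_op_R i_gt0 (T_op_R i_gt0 PsiF)) (T_op_R i_gt0 PsiF) PsiF.
exact: R_loc_quadratic.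
Qed.

Lemma T_move_out i u p : p != prev_ord i -> p != i -> T_move i u p = u p.
Proof.
by move=> pi p_i; rewrite /T_move; case: ifP => _; rewrite ffunE (negPf p_i) ?(negPf pi).
Qed.

Lemma T_move_local i u w p : u (prev_ord i) = w (prev_ord i) -> u i = w i ->
  (p == prev_ord i) || (p == i) -> T_move i u p = T_move i w p.
Proof.
move=> eprev ei; rewrite /T_move; case: ifP => [/eqP i0|/negbT i_gt0].
  by rewrite prev_ord0 // orbb => /eqP ->; rewrite !ffunE eqxx ei.
have ip : (i == prev_ord i) = false.
  by apply/negbTE; rewrite eq_sym prev_ord_neq // lt0n.
by case/orP => /eqP ->; rewrite !ffunE ?eqxx ?ip ?eprev ?ei.
Qed.

Lemma T_mx_far i j : (i.+1 < j)%N ->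
  T_mx N Q q i *m T_mx N Q q j = T_mx N Q q j *m T_mx N Q q i.
Proof.
move=> ij; have := @T_mx_word_eq [:: i; j] [:: j; i]; rewrite /= !mulmx1.
apply=> Psi v /=.
have [pj_pi pj_i j_pi j_i] :
    [/\ prev_ord j != prev_ord i, prev_ord j != i, j != prev_ord i & j != i].
  by split; rewrite -val_eqE /=; lia.
have [pi_pj i_pj pi_j i_j] :
    [/\ prev_ord i != prev_ord j, i != prev_ord j, prev_ord i != j & i != j].
  by split; rewrite -val_eqE /=; lia.
have mi_pj u : T_move i u (prev_ord j) = u (prev_ord j) by rewrite T_move_out.
have mi_j u : T_move i u j = u j by rewrite T_move_out.
have mj_pi u : T_move j u (prev_ord i) = u (prev_ord i) by rewrite T_move_out.
have mj_i u : T_move j u i = u i by rewrite T_move_out.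
have moveC : T_move i (T_move j v) = T_move j (T_move i v).
  apply/ffunP => p.
  case: (boolP ((p == prev_ord i) || (p == i))) => [p_at_i|p_off_i].
    have /norP [p_pj p_j] : ~~ ((p == prev_ord j) || (p == j)).
      by case/orP: p_at_i => /eqP ->; apply/norP; split.
    by rewrite (T_move_out _ p_pj p_j); apply: T_move_local; rewrite ?mj_pi ?mj_i.
  case/norP: p_off_i => p_pi p_i; rewrite (T_move_out _ p_pi p_i).
  case: (boolP ((p == prev_ord j) || (p == j))) => [p_at_j|/norP[p_pj p_j]].
    by apply: T_move_local; rewrite ?mi_pj ?mi_j.
  by rewrite !T_move_out.
rewrite /twoterm_act /T_move_coef /T_stay_coef.
by rewrite !mi_pj !mi_j !mj_pi !mj_i moveC; ring.
Qed.

Lemma is_HB_rep_T_mx : Q != 0 -> q != 0 -> is_HB_rep Q q (@T_mx k d N Q q).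
Proof.
move=> Q0 q0; split.
- by move=> i; apply: T_mx_quadK.
- by move=> i; apply: T_mx_quadR.
- by move=> i j i_gt0 ji; apply: T_mx_braid.
- by move=> i j i0 j1; apply: T_mx_braidB.
- by move=> i j /orP[ij|ji]; [|symmetry]; apply: T_mx_far.
Qed.

End TensorAction.

Section EmbedIndex.
Variables (d e : nat).
Local Open Scope nat_scope.

(* [embed_idx] is g_e on indices: [a] stands for the letter a - (2d - 1)/2 of
   I_2d, and an index b of I_2d+1 for b - d.  The letters +-1/2 are d.-1, d. *)
Definition skip_at (j : nat) : nat := if e <= j then j.+1 else j.

Definition embed_idx (a : nat) : nat :=
  if d <= a then d + skip_at (a - d) else d - skip_at (d.-1 - a).

Definition merged (a : nat) : bool := (0 < e) && ((a == d.-1) || (a == d)).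
Definition merged_neg (a : nat) : bool := (0 < e) && (a == d.-1).

Definition dist_mid (b : nat) : nat := if d <= b then b - d else d - b.

Definition embed_inv (b : nat) : nat :=
  let j := if dist_mid b < e then dist_mid b else (dist_mid b).-1 in
  if d <= b then d + j else d.-1 - j.

Lemma embed_idx_lt a : a < 2 * d -> embed_idx a < (2 * d).+1.
Proof. by rewrite /embed_idx /skip_at; repeat case: ifP; lia. Qed.

Lemma embed_idx_rev a : a < 2 * d -> embed_idx (2 * d - a.+1) = 2 * d - embed_idx a.
Proof. by rewrite /embed_idx /skip_at; repeat case: ifP; lia. Qed.

Lemma embed_idx_merged a : merged a -> embed_idx a = d.
Proof.
by rewrite /merged /embed_idx /skip_at => /andP[e_gt0 /orP[]/eqP->]; repeat case: ifP; lia.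
Qed.

Lemma embed_idx_mono a b :
  a < b -> b < 2 * d -> ~~ (merged a && merged b) -> embed_idx a < embed_idx b.
Proof. by rewrite /merged /embed_idx /skip_at; repeat case: ifP; lia. Qed.

Lemma embed_idx_neq_mid a : a < 2 * d -> ~~ merged a -> embed_idx a <> d.
Proof. by rewrite /merged /embed_idx /skip_at; repeat case: ifP; lia. Qed.

Lemma embed_idx_gt_mid a :
  a < 2 * d -> ~~ merged a -> (d < embed_idx a) = (d <= a).
Proof. by rewrite /merged /embed_idx /skip_at; repeat case: ifP; lia. Qed.

Lemma embed_invK b : 0 < d -> e <= d -> b < (2 * d).+1 -> dist_mid b <> e ->
  embed_inv b < 2 * d /\ embed_idx (embed_inv b) = b.
Proof. by rewrite /embed_inv /embed_idx /skip_at /dist_mid; repeat case: ifP; lia. Qed.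

End EmbedIndex.

Section LetterCounts.
Variables (d N : nat) (A C : pred 'I_N).
Local Open Scope nat_scope.
Implicit Types (w : tbasis d N) (i p : 'I_d).

Definition pair_count w : nat :=
  \sum_(p < d) \sum_(p' < d) ((p < p') && A (w p) && C (w p')).

Definition letter_count w : nat := \sum_(p < d) C (w p).

Definition swap_pos i p : 'I_d :=
  if p == prev_ord i then i else if p == i then prev_ord i else p.

Lemma swap_posK i : involutive (swap_pos i).
Proof.
move=> p; rewrite /swap_pos; case: (eqVneq p (prev_ord i)) => [->|pi].
  by rewrite eqxx; case: (eqVneq i (prev_ord i)) => // ->.
case: (eqVneq p i) => [->|p_i]; first by rewrite eqxx.
by rewrite (negPf pi) (negPf p_i).
Qed.

Lemma swap_atE i w : swap_at i w = [ffun p => w (swap_pos i p)].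
Proof.
apply/ffunP => p; rewrite !ffunE /swap_pos.
by case: (p == prev_ord i) => //; case: (p == i).
Qed.

Lemma sum_pair_indicator (a b : 'I_d) (P : 'I_d -> 'I_d -> bool) :
  \sum_(p < d) \sum_(p' < d) ((p == a) && (p' == b) && P p p') = P a b.
Proof.
rewrite (bigD1 a) //= [X in _ + X]big1 => [|p /negPf ->]; last by rewrite big1.
by rewrite addn0 (bigD1 b) //= !eqxx [X in _ + X]big1 ?addn0 // => p' /negPf ->.
Qed.

Lemma pair_count_swap i w : 0 < i ->
  pair_count (swap_at i w) + (A (w (prev_ord i)) && C (w i)) =
  pair_count w + (A (w i) && C (w (prev_ord i))).
Proof.
move=> i_gt0; rewrite swap_atE /pair_count.
under eq_bigr do under eq_bigr do rewrite !ffunE.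
rewrite (reindex_inj (can_inj (swap_posK i))) /=.
under eq_bigr do rewrite (reindex_inj (can_inj (swap_posK i))) /=.
under eq_bigr do under eq_bigr do rewrite !swap_posK.
rewrite -(sum_pair_indicator (prev_ord i) i (fun p p' => A (w p) && C (w p'))).
rewrite -(sum_pair_indicator i (prev_ord i) (fun p p' => A (w p) && C (w p'))).
rewrite -!big_split /=; apply: eq_bigr => p _; rewrite -!big_split /=.
apply: eq_bigr => p' _; case: (A (w p)); case: (C (w p')); rewrite ?andbF ?andbT //.
rewrite /swap_pos -!val_eqE /=.
have prevE : nat_of_ord (prev_ord i) = i.-1 by [].
by repeat case: ifP; lia.
Qed.

Lemma letter_count_swap i w : letter_count (swap_at i w) = letter_count w.
Proof.
rewrite swap_atE /letter_count; under eq_bigr do rewrite ffunE.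
by rewrite [RHS](reindex_inj (can_inj (swap_posK i))).
Qed.

Lemma pair_count_set_first i x w : i = 0 :> nat -> A x = A (w i) ->
  pair_count (set_first i x w) = pair_count w.
Proof.
move=> i0 Ax; apply: eq_bigr => p _; apply: eq_bigr => p' _; rewrite !ffunE.
case: (eqVneq p' i) => [->|_]; first by rewrite i0 ltn0.
by case: (eqVneq p i) => [->|_]; rewrite ?Ax.
Qed.

Lemma letter_count_set_first i x w :
  letter_count (set_first i x w) + C (w i) = letter_count w + C x.
Proof.
rewrite /letter_count (bigD1 i) //= [in RHS](bigD1 i) //= set_first_eq.
under eq_bigr => p p_i do rewrite set_first_ne //.
by rewrite addnAC [RHS]addnAC (addnC (C x)).
Qed.

End LetterCounts.

Section Embedding.
Variables (k : fieldType) (d : nat) (Q q : k) (e : nat).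
Hypotheses (Q0 : Q != 0) (q0 : q != 0).
Local Notation B1 := (tbasis d (2 * d)).
Local Notation B2 := (tbasis d (2 * d).+1).
Implicit Types (w : B1) (i : 'I_d).

Definition embed_letter (a : 'I_(2 * d)) : 'I_(2 * d).+1 := inord (embed_idx d e a).

Lemma embed_letterE a : nat_of_ord (embed_letter a) = embed_idx d e a.
Proof. by rewrite inordK // embed_idx_lt. Qed.

Lemma embed_letter_rev a : embed_letter (rev_ord a) = rev_ord (embed_letter a).
Proof. by apply: val_inj; rewrite /= !embed_letterE embed_idx_rev // subSS. Qed.

Definition embed_tuple w : B2 := [ffun p => embed_letter (w p)].

Lemma embed_tuple_T_move i w : embed_tuple (T_move i w) = T_move i (embed_tuple w).
Proof.
apply/ffunP => p; rewrite /T_move; case: ifP => _; rewrite !ffunE.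
  by case: (p == i); rewrite ?embed_letter_rev.
by case: (p == prev_ord i); case: (p == i).
Qed.

Definition is_half (a : 'I_(2 * d)) : bool := merged d e a.
Definition is_minus_half (a : 'I_(2 * d)) : bool := merged_neg d e a.

(* The letters +-1/2 both go to 0, on which K_Q and R_q act diagonally.  The
   weight Q^-n q^-m makes up for this, where n is the number of letters -1/2 and
   m the number of pairs of positions p < p' carrying +-1/2 at p and -1/2 at p'. *)
Definition embed_scale w : k :=
  Q^-1 ^+ letter_count is_minus_half w * q^-1 ^+ pair_count is_half is_minus_half w.

Lemma embed_scale_neq0 w : embed_scale w != 0.
Proof. by rewrite mulf_neq0 // expf_neq0 // invr_neq0. Qed.

Lemma embed_scale_K i w : i = 0%N :> nat ->
  is_half (rev_ord (w i)) = is_half (w i) ->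
  embed_scale (set_first i (rev_ord (w i)) w) * Q^-1 ^+ is_minus_half (w i) =
  embed_scale w * Q^-1 ^+ is_minus_half (rev_ord (w i)).
Proof.
move=> i0 half_rev; rewrite /embed_scale (pair_count_set_first _ i0 half_rev).
by rewrite mulrAC -exprD letter_count_set_first exprD; ring.
Qed.

Lemma embed_scale_R i w : (0 < i)%N ->
  embed_scale (swap_at i w) * q^-1 ^+ (is_half (w (prev_ord i)) && is_minus_half (w i)) =
  embed_scale w * q^-1 ^+ (is_half (w i) && is_minus_half (w (prev_ord i))).
Proof.
move=> i_gt0; rewrite /embed_scale letter_count_swap -mulrA -exprD.
by rewrite pair_count_swap // exprD; ring.
Qed.

Local Notation compat i :=
  (twoterm_compat (T_move_coef k i) (T_stay_coef Q q i) (T_move i)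
                  (T_move_coef k i) (T_stay_coef Q q i) (T_move i) embed_scale embed_tuple).

Lemma embed_compat_K i w : i = 0%N :> nat -> compat i w.
Proof.
move=> i0; rewrite /twoterm_compat /T_move_coef /T_stay_coef /T_move.
have -> : (val i == 0%N) by apply/eqP.
rewrite !ffunE; have lt_a := ltn_ord (w i).
have half_rev : is_half (rev_ord (w i)) = is_half (w i).
  by rewrite /is_half /merged /=; apply/idP/idP; lia.
have := embed_scale_K i0 half_rev.
case: (boolP (is_half (w i))) => half_a scale.
  have Ga : embed_idx d e (w i) = d by apply: embed_idx_merged.
  right; split.
    apply/ffunP => p; rewrite !ffunE; case: eqP => [->|//].
    by apply: val_inj; rewrite /= embed_letterE Ga; lia.
  rewrite /K_move_coef /K_stay_coef embed_letterE Ga.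
  move: half_a scale; rewrite /is_half /is_minus_half /merged /merged_neg /=.
  case/andP => e_gt0 /orP[]/eqP a_eq; rewrite a_eq; decide_nat;
    rewrite /= ?expr0 ?expr1 ?mulr1 => scale.
    by rewrite -scale; field.
  by rewrite scale; field.
have [neg_a neg_rev] : is_minus_half (w i) = false /\ is_minus_half (rev_ord (w i)) = false.
  by move: half_a; rewrite /is_minus_half /is_half /merged /merged_neg /=; split; lia.
rewrite neg_a neg_rev !expr0 !mulr1 in scale.
have Ga_neq := embed_idx_neq_mid lt_a half_a.
left; split; first by rewrite scale /K_move_coef embed_letterE; decide_nat; rewrite mulrC.
have gt_mid := embed_idx_gt_mid lt_a half_a; rewrite /K_stay_coef embed_letterE.
by case: (leqP d (w i)) gt_mid => da gt_mid; decide_nat.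
Qed.

Lemma embed_compat_R i w : (0 < i)%N -> compat i w.
Proof.
move=> i_gt0; rewrite /twoterm_compat /T_move_coef /T_stay_coef /T_move.
have -> : (val i == 0%N) = false by apply/negbTE; rewrite -lt0n.
rewrite !ffunE; have scale := embed_scale_R w i_gt0.
have lt_a1 := ltn_ord (w (prev_ord i)); have lt_a2 := ltn_ord (w i).
case: (boolP (is_half (w (prev_ord i)) && is_half (w i))) => [/andP[half1 half2]|halves].
  have Ga1 : embed_idx d e (w (prev_ord i)) = d by apply: embed_idx_merged.
  have Ga2 : embed_idx d e (w i) = d by apply: embed_idx_merged.
  right; split.
    apply/ffunP => p; rewrite !ffunE.
    have eqG : embed_letter (w (prev_ord i)) = embed_letter (w i).
      by apply: val_inj; rewrite /= !embed_letterE Ga1 Ga2.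
    by case: eqP => [->|_]; [|case: eqP => [->|]]; rewrite ?eqG.
  rewrite /R_move_coef /R_stay_coef !embed_letterE Ga1 Ga2 eqxx /=.
  move: half1 half2 scale; rewrite /is_half /is_minus_half /merged /merged_neg /=.
  case/andP => e_gt0 /orP[]/eqP a1_eq /andP[_ /orP[]/eqP a2_eq]; rewrite a1_eq a2_eq;
    decide_nat; rewrite ?expr0 ?expr1 ?mulr1 /= => scale.
  - by ring.
  - by rewrite scale; field.
  - by rewrite -scale; field.
  - by ring.
have [neg1 neg2] : (is_half (w (prev_ord i)) && is_minus_half (w i)) = false /\
                   (is_half (w i) && is_minus_half (w (prev_ord i))) = false.
  by move: halves; rewrite /is_minus_half /is_half /merged /merged_neg; split; lia.
rewrite neg1 neg2 !expr0 !mulr1 in scale; rewrite scale.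
have halves' : ~~ (is_half (w i) && is_half (w (prev_ord i))) by rewrite andbC.
rewrite /R_move_coef /R_stay_coef !embed_letterE; left.
case: (ltngtP (w (prev_ord i)) (w i)) => [lt12|lt21|eq12].
- by have := embed_idx_mono lt12 lt_a2 halves; split; decide_nat; ring.
- by have := embed_idx_mono lt21 lt_a1 halves'; split; decide_nat; ring.
- by rewrite eq12; split; decide_nat; ring.
Qed.

Definition embed_mx : 'M[k]_(tdim d (2 * d), tdim d (2 * d).+1) :=
  weighted_map_mx embed_scale embed_tuple.

Lemma embed_mx_intertwines :
  intertwines (T_mx (2 * d) Q q) (T_mx (2 * d).+1 Q q) embed_mx.
Proof.
move=> i; rewrite !T_mx_twoterm.
have compat w : compat i w.
  by case: (posnP i) => [i0|i_gt0]; [apply: embed_compat_K | apply: embed_compat_R].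
exact: (weighted_map_mx_intertwines (embed_tuple_T_move i) compat).
Qed.

End Embedding.

Lemma dist_mid_avoid d (u : 'I_d -> 'I_(2 * d).+1) :
  exists e : 'I_d.+1, forall p, dist_mid d (u p) <> e.
Proof.
set S := [set (inord (dist_mid d (u p)) : 'I_d.+1) | p : 'I_d].
have /subsetPn [e _ eNS] : ~~ ([set: 'I_d.+1] \subset S).
  apply/negP => /subset_leq_card; rewrite cardsT card_ord => le_dS.
  by have := leq_trans le_dS (leq_imset_card _ _); rewrite card_ord ltnn.
exists e => p dist_e; apply: (negP eNS); rewrite /S; apply/imsetP; exists p => //.
have lt_dist : (dist_mid d (u p) < d.+1)%N.
  by have := ltn_ord (u p); rewrite /dist_mid; case: ifP; lia.
by apply: val_inj; rewrite /= inordK // dist_e.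
Qed.

Lemma embed_tuple_onto d (u : tbasis d (2 * d).+1) : (0 < d)%N ->
  exists (e : 'I_d.+1) (w : tbasis d (2 * d)), embed_tuple e w = u.
Proof.
move=> d_gt0; have [e miss] := dist_mid_avoid u.
have le_ed : (e <= d)%N by rewrite -ltnS.
pose inv p := embed_invK d_gt0 le_ed (ltn_ord (u p)) (miss p).
exists e, [ffun p => Ordinal (inv p).1].
by apply/ffunP => p; apply: val_inj; rewrite !ffunE /= embed_letterE (inv p).2.
Qed.

Lemma embed_mxcol_row_full (k : fieldType) (d : nat) (Q q : k) :
  Q != 0 -> q != 0 -> (0 < d)%N ->
  row_full (\mxcol_(e < d.+1) embed_mx d Q q e).
Proof.
move=> Q0 q0 d_gt0; rewrite -sub1mx; apply/row_subP => r.
have [e [w Gw]] := embed_tuple_onto (enum_val r) d_gt0.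
rewrite row1 -(enum_valK r) -Gw; apply: submx_trans (submx_mxcol _ e).
exact/weighted_map_mx_delta/embed_scale_neq0.
Qed.

Theorem lemma3p13 (k : fieldType) (Q q : k) (d : nat) :
  Q != 0 -> q != 0 -> (1 <= d)%N ->
  HB_semisimple Q q d ->
  exists (m : nat) (F : 'M[k]_(tdim d (2 * d).+1, \sum_(j < m) tdim d (2 * d)))
         (G : 'M[k]_(\sum_(j < m) tdim d (2 * d), tdim d (2 * d).+1)),
    [/\ intertwines (T_mx (2 * d).+1 Q q) (rep_dsum m (T_mx (2 * d) Q q)) F,
        intertwines (rep_dsum m (T_mx (2 * d) Q q)) (T_mx (2 * d).+1 Q q) G &
        F *m G = 1%:M].
Proof.
move=> Q0 q0 d_gt0 semisimple.
pose Phi := \mxcol_(e < d.+1) embed_mx d Q q e.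
have crX := semisimple _ _ (is_HB_rep_dsum d.+1 (is_HB_rep_T_mx d (2 * d) Q0 q0)).
have itw : intertwines (rep_dsum d.+1 (T_mx (2 * d) Q q)) (T_mx (2 * d).+1 Q q) Phi.
  move=> i; rewrite /rep_dsum mul_mxdiag_mxcol mxcol_mul.
  by apply: eq_mxcol => e; apply: embed_mx_intertwines.
have [F [itwF FPhi]] := intertwiner_split crX itw (embed_mxcol_row_full Q0 q0 d_gt0).
by exists d.+1, F, Phi.
Qed.
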